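(* Let $n\ge1$, $m=2n-1$ and $0\le\alpha\le n-1$. An element $s\in R_\alpha^{\langle\tau\rangle}\setminus\{\pm1\}$ lies in $Q_\alpha$ if and only if either (a) $\alpha\ge\lfloor n/2\rfloor$, $s\not\equiv\pm1\bmod u$, and $s^2-1\bmod u$ is a square in $k^\times$; or (b) $s\equiv\varepsilon\bmod u$ with $\varepsilon\in\{\pm1\}$, $s=\varepsilon+t^js_0+O(t^{j+1})$ with $s_0\in k^\times$ and $\max\{1,n-(2\alpha+1)\}\le j\le n-\alpha-1$, and $\varepsilon(-1)^j2s_0$ is a square in $k^\times$. Moreover, with $\mathrm{pr}_\alpha:R_\alpha^{\langle\tau\rangle}=k[t]/(t^{n-\alpha})\to k[t]/(t^{n-\alpha-1})$ the reduction map: (i) if $0\le\alpha\le n-2$, the preimage of $1$ (resp. of $-1$) under $\mathrm{pr}_\alpha|_{Q_\alpha}$ has exactly $(q-1)/2$ elements; (ii) if $0\le\alpha\le n-2$ and $s_0\in R_\alpha^{\langle\tau\rangle,\prime}$ with $\mathrm{pr}_\alpha(s_0)\ne\pm1$, then $\mathrm{pr}_\alpha^{-1}(\mathrm{pr}_\alpha(s_0))$ has $q$ elements, and $s_0\in Q_\alpha$ if and only if $\mathrm{pr}_\alpha^{-1}(\mathrm{pr}_\alpha(s_0))\subseteq Q_\alpha$; (iii) $\#Q_{n-1}=(q-3)/2$.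
   Context: $k=\mathbb F_q$, $q$ odd, $t=u^2$. For $0\le\alpha<n$ and $m=2n-1$ let $R_\alpha=k[u]/(u^{m-2\alpha})$ with $\tau$ acting by $u\mapsto-u$, $R_\alpha^{\langle\tau\rangle}=k[t]/(t^{n-\alpha})$ its invariants, $R_\alpha^{\langle\tau\rangle,\prime}=\{s\in R_\alpha^{\langle\tau\rangle}: s\equiv\pm1\bmod u^{m+1-2(2\alpha+1)}\}$ (no condition if the exponent is $\le0$), $N_{\tau,\alpha}:R_\alpha\to R_\alpha^{\langle\tau\rangle}$, $s\mapsto s\tau(s)$, and $Q_\alpha=\{s\in R_\alpha^{\langle\tau\rangle,\prime}: s\tau(s)-1\in N_{\tau,\alpha}(R_\alpha)\}\setminus\{\pm1\}$. *)

From HB Require Import structures.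
From mathcomp Require Import all_boot all_order all_algebra all_field.
Set Implicit Arguments. Unset Strict Implicit. Unset Printing Implicit Defensive.
Import GRing.Theory.
Local Open Scope ring_scope.

Section Defs.
Variable k : finFieldType.

(* R_alpha = k[u]/(u^(m - 2 alpha)), m = 2n-1 *)
Definition Rexp (n a : nat) : nat := (2 * n - 1 - 2 * a)%N.
Definition Ru (n a : nat) := {poly %/ ('X^(Rexp n a) : {poly k})}.
(* R_alpha^<tau> = k[t]/(t^(n - alpha)) *)
Definition Rt (n a : nat) := {poly %/ ('X^(n - a) : {poly k})}.
Definition Rpr (n a : nat) := {poly %/ ('X^(n - a - 1) : {poly k})}.

Definition tau n a (x : Ru n a) : Ru n a := in_qpoly _ ((val x) \Po (- 'X)).
(* the identification k[t]/(t^(n-alpha)) = R_alpha^<tau>, t = u^2 *)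
Definition emb n a (s : Rt n a) : Ru n a := in_qpoly _ ((val s) \Po 'X^2).
Definition Ntau n a (x : Ru n a) : Ru n a := x * tau x.
Definition congru n a (e : nat) (x y : Ru n a) : bool :=
  dvdp 'X^e (val x - val y).
Definition pr n a (s : Rt n a) : Rpr n a := in_qpoly _ (val s).

(* R_alpha^{<tau>,'}: exponent m+1-2(2 alpha+1), truncated at 0 (no condition) *)
Definition Rprime n a (s : Rt n a) : bool :=
  let e := ((2 * n - 1) + 1 - 2 * (2 * a + 1))%N in
  congru e (emb s) 1 || congru e (emb s) (-1).

Definition Qset n a : {set Rt n a} :=
  [set s : Rt n a | [&& Rprime s,
     [exists x : Ru n a, emb s * tau (emb s) - 1 == Ntau x],
     s != 1 & s != -1]].

Definition sq_unit (c : k) : Prop := exists y : k, y != 0 /\ y ^+ 2 = c.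

Definition condA n a (s : Rt n a) : Prop :=
  [/\ (n %/ 2 <= a)%N,
      ~~ congru 1 (emb s) 1, ~~ congru 1 (emb s) (-1) &
      sq_unit ((val (emb s))`_0 ^+ 2 - 1)].

Definition condB n a (s : Rt n a) : Prop :=
  exists (eps : k) (j : nat) (s0 : k),
    [/\ eps = 1 \/ eps = -1,
        congru 1 (emb s) (eps%:A) /\ s0 != 0,
        dvdp 'X^(j.+1) (val s - (eps%:P + s0 *: 'X^j)),
        (maxn 1 (n - (2 * a + 1)) <= j <= n - a - 1)%N &
        sq_unit (eps * (-1) ^+ j * 2 * s0)].
End Defs.

(* Via t = u^2, R_alpha^<tau> = k[t]/(t^L), L = n - alpha, is the even part of
   R_alpha = k[u]/(u^(2L-1)).  Writing x = A(t) + u B(t), the norm x tau(x) is A^2 - t B^2,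
   so s lies in Q_alpha iff s^2 - 1 = A^2 - t B^2 mod t^L (besides s in R_alpha^<tau>,' and
   s <> +-1).  For s^2 - 1 = t^j w with w(0) <> 0 and j < L, comparing constant terms
   repeatedly shows that this happens iff (-1)^j w(0) is a nonzero square; conversely a
   square root of +-w(0) lifts by Newton's method since 2 is invertible.  If s(0) <> +-1
   then j = 0, which gives (a); if s = eps + t^j s0 + ..., then w(0) = 2 eps s0, which gives
   (b), and the condition s in R_alpha^<tau>,' becomes the bounds on alpha and j.  Hence
   membership only depends on s(0) or on the first nonconstant term of s - eps, which gives
   (i) and (ii).  For alpha = n - 1, Q is the set of c <> +-1 with c^2 - 1 a nonzero square,
   onto which the Joukowski map z |-> (z + 1/z)/2 is two-to-one from {z : z <> 0, z^2 <> 1}. *)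

From HB Require Import structures.
From mathcomp Require Import all_boot all_order all_algebra all_field.
From mathcomp Require Import ring zify.
Import GRing.Theory.
Local Open Scope ring_scope.
Set Implicit Arguments. Unset Strict Implicit. Unset Printing Implicit Defensive.

Section PolyXn.
Variable R : fieldType.
Implicit Types p q w : {poly R}.

Lemma dvdp_X_coef0 p : ('X %| p) = (p`_0 == 0).
Proof.
have -> : ('X : {poly R}) = 'X - 0%:P by rewrite subr0.
by rewrite dvdp_XsubCl /root horner_coef0.
Qed.

Lemma coef0_mulXn n p : (0 < n)%N -> ('X^n * p)`_0 = 0.
Proof. by case: n => // n _; rewrite coef0M coefXn mul0r. Qed.

Lemma coef0_expr2 p : (p ^+ 2)`_0 = p`_0 ^+ 2.
Proof. by rewrite !expr2 coef0M. Qed.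

Lemma coef0_eq0_mulX p : p`_0 = 0 -> exists q, p = 'X * q.
Proof.
move=> h; have : ('X %| p) by rewrite dvdp_X_coef0 h.
by case/dvdpP => q ->; exists q; rewrite mulrC.
Qed.

Lemma dvdp_XnW m n p : (m <= n)%N -> 'X^n %| p -> 'X^m %| p.
Proof. by move=> hmn; apply: dvdp_trans; apply: dvdp_exp2l. Qed.

Lemma coef0_dvdp_Xn e p : (0 < e)%N -> 'X^e %| p -> p`_0 = 0.
Proof.
by move=> e_gt0 /(dvdp_XnW e_gt0); rewrite expr1 dvdp_X_coef0 => /eqP.
Qed.

Lemma dvdp_XnS_mulX n p : ('X^(n.+1) %| 'X * p) = ('X^n %| p).
Proof. by rewrite exprS dvdp_mul2l // polyX_eq0. Qed.

Lemma dvdp_XnS_mulXn n p : ('X^(n.+1) %| 'X^n * p) = ('X %| p).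
Proof. by rewrite exprSr dvdp_mul2l // expf_neq0 // polyX_eq0. Qed.

Lemma dvdp_Xn_mulXn e j w : w`_0 != 0 -> ('X^e %| 'X^j * w) = (e <= j)%N.
Proof.
move=> hw; case: (leqP e j) => h; first by apply: dvdp_mulr; apply: dvdp_exp2l.
apply/negbTE/negP => /(dvdp_XnW h).
by rewrite dvdp_XnS_mulXn dvdp_X_coef0; apply/negP.
Qed.

Lemma polyXn_factor p : p != 0 -> exists j w, p = 'X^j * w /\ w`_0 != 0.
Proof.
elim: {p}(size p) {-2}p (leqnn (size p)) => [|m IH] p hs hp.
  by move: hs; rewrite leqn0 size_poly_eq0 (negbTE hp).
have [h0|h0] := eqVneq p`_0 0; last by exists 0%N, p; rewrite expr0 mul1r.
have [q hq] := coef0_eq0_mulX h0.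
have hq0 : q != 0 by apply: contraNneq hp => q0; rewrite hq q0 mulr0.
have [|j [w [hqw hw0]]] := IH q _ hq0.
  by move: hs; rewrite hq mulrC size_mulX.
by exists j.+1, w; rewrite hq hqw exprS mulrA.
Qed.

Lemma poly_coef0_Xn_factor p : p != (p`_0)%:P ->
  exists j w, [/\ (0 < j)%N, w`_0 != 0 & p = (p`_0)%:P + 'X^j * w].
Proof.
rewrite -subr_eq0 => /polyXn_factor [j [w [pw w0]]].
exists j, w; split => //; last by rewrite -pw addrC subrK.
case: j pw => // /(congr1 (coefp 0)) /=; rewrite coefB coefC subrr mul1r => w0E.
by rewrite -w0E eqxx in w0.
Qed.

Lemma polyXn_factor_uniq j w i c : w`_0 != 0 -> c != 0 ->
  'X^(i.+1) %| 'X^j * w - c *: 'X^i -> i = j /\ c = w`_0.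
Proof.
move=> hw hc h.
have cXn_ndvd m : ('X^(m.+1) %| c *: 'X^m) = false.
  by rewrite -mul_polyC mulrC dvdp_XnS_mulXn dvdp_X_coef0 coefC (negbTE hc).
case: (ltngtP i j) => hij.
- by move: h; rewrite dvdp_addr ?dvdp_Xn_mulXn // dvdpNr cXn_ndvd.
- have h2 := dvdp_XnW (ltnW hij : (j.+1 <= i.+1)%N) h.
  have h3 : 'X^(j.+1) %| c *: 'X^i.
    by rewrite -mul_polyC; apply/dvdp_mull/dvdp_exp2l.
  by move: h2; rewrite dvdp_addl ?dvdpNr // dvdp_Xn_mulXn // ltnn.
- subst i; split => //.
  move: h; rewrite -mul_polyC (mulrC c%:P) -mulrBr dvdp_XnS_mulXn dvdp_X_coef0.
  by rewrite coefB coefC subr_eq0 => /eqP.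
Qed.

Lemma coef0_comp_X2 p : (p \Po 'X^2)`_0 = p`_0.
Proof. by rewrite coef_comp_poly_Xn // dvdn0 div0n. Qed.

Lemma dvdp_Xodd_comp_X2 i p : ('X^(i.*2.+1) %| p \Po 'X^2) = ('X^(i.+1) %| p).
Proof.
elim: i p => [|i IH] p; first by rewrite !expr1 !dvdp_X_coef0 coef0_comp_X2.
have e : (i.+1.*2.+1 = 2 + i.*2.+1)%N by rewrite doubleS.
have [h0|h0] := eqVneq p`_0 0; last first.
  by apply/idP/idP => /coef0_dvdp_Xn; rewrite ?coef0_comp_X2 => /(_ isT) /eqP;
    rewrite (negbTE h0).
have [q ->] := coef0_eq0_mulX h0.
rewrite dvdp_XnS_mulX rmorphM /= comp_polyX e exprD dvdp_mul2l ?IH //.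
by rewrite expf_neq0 // polyX_eq0.
Qed.

Lemma dvdp_Xeven_comp_X2 i p : ('X^(i.*2) %| p \Po 'X^2) = ('X^i %| p).
Proof.
case: i => [|i]; first by rewrite !expr0 !dvd1p.
apply/idP/idP => [h|/dvdpP [q ->]].
  by rewrite -dvdp_Xodd_comp_X2; apply: dvdp_trans h; rewrite dvdp_exp2l.
by rewrite rmorphM /= comp_Xn_poly -exprM mul2n dvdp_mull.
Qed.

End PolyXn.

Section EvenOddParts.
Variable R : fieldType.
Implicit Types A B : {poly R}.

Lemma comp_X2_NX A : (A \Po 'X^2) \Po (- 'X) = A \Po 'X^2.
Proof. by rewrite -comp_polyA comp_Xn_poly sqrrN. Qed.

Lemma norm_even_odd A B (x := A \Po 'X^2 + (B \Po 'X^2) * 'X) :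
  x * (x \Po (- 'X)) = (A ^+ 2 - 'X * B ^+ 2) \Po 'X^2.
Proof.
rewrite /x rmorphD rmorphM /= !comp_X2_NX comp_polyX.
rewrite !expr2 comp_polyB !comp_polyM comp_polyX.
set a := A \Po 'X^2; set b := B \Po 'X^2; ring.
Qed.

End EvenOddParts.

Section QuotientXn.
Variable R : fieldType.
Variable N : nat.
Hypothesis N_gt0 : (0 < N)%N.
Implicit Types p q : {poly R}.
Local Notation d := ('X^N : {poly R}).

Lemma mk_monic_XnE : mk_monic d = d.
Proof. by rewrite mk_monic_Xn prednK. Qed.

Lemma val_in_qpolyXn p : val (in_qpoly d p) = Pdiv.Ring.rmodp p d.
Proof. by rewrite /= mk_monic_XnE. Qed.

Lemma eq_in_qpolyXn p q : (in_qpoly d p == in_qpoly d q) = (d %| p - q).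
Proof.
have dmon : d \is monic := monicXn _ _.
rewrite -val_eqE !val_in_qpolyXn; apply/eqP/idP => [h|/dvdpP [r hr]].
  rewrite (Pdiv.RingMonic.rdivp_eq dmon p) (Pdiv.RingMonic.rdivp_eq dmon q) h.
  by rewrite opprD addrACA subrr addr0 -mulrBl dvdp_mulIr.
rewrite -(subrK q p) hr Pdiv.RingMonic.rmodpD // Pdiv.RingMonic.rmodp_mull //.
by rewrite add0r.
Qed.

Lemma in_qpolyXn_val (x : {poly %/ d}) : in_qpoly d (val x) = x.
Proof.
apply: val_inj; rewrite val_in_qpolyXn Pdiv.Ring.rmodp_small //.
by apply: leq_trans (size_mk_monic x) _; rewrite mk_monic_XnE.
Qed.

Lemma dvdp_Xn_rmodpXn e p q : (e <= N)%N ->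
  ('X^e %| Pdiv.Ring.rmodp p d - q) = ('X^e %| p - q).
Proof.
move=> he; rewrite [in RHS](Pdiv.RingMonic.rdivp_eq (monicXn _ N) p) -addrA.
by rewrite [in RHS]dvdp_addr // dvdp_mull // dvdp_exp2l.
Qed.

Lemma in_qpolyXn_comp_NX p :
  in_qpoly d (val (in_qpoly d p) \Po (- 'X)) = in_qpoly d (p \Po (- 'X)).
Proof.
apply/eqP; rewrite eq_in_qpolyXn val_in_qpolyXn.
rewrite {2}(Pdiv.RingMonic.rdivp_eq (monicXn _ N) p).
rewrite rmorphD rmorphM /= comp_Xn_poly exprNn opprD addrCA subrr addr0.
by rewrite dvdpNr mulrA dvdp_mull.
Qed.

(* Write x = A(u^2) + u B(u^2); then x tau(x) = (A^2 - t B^2)(u^2), and since N is odd,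
   u^N divides an even polynomial Q(u^2) iff t^(i+1) divides Q. *)
Lemma even_normP P i : N = i.*2.+1 ->
  (exists x : {poly %/ d}, in_qpoly d (P \Po 'X^2) == x * in_qpoly d (val x \Po (- 'X)))
  <-> (exists A B, 'X^(i.+1) %| P - (A ^+ 2 - 'X * B ^+ 2)).
Proof.
move=> Ni; split => [[x]|[A [B hAB]]].
  rewrite -[x in x * _]in_qpolyXn_val -in_qpolyM eq_in_qpolyXn.
  move: (val x) => p; rewrite -(poly_even_odd p) norm_even_odd -comp_polyB.
  by rewrite Ni dvdp_Xodd_comp_X2 => h; exists (even_poly p), (odd_poly p).
exists (in_qpoly d (A \Po 'X^2 + (B \Po 'X^2) * 'X)).
rewrite in_qpolyXn_comp_NX -in_qpolyM eq_in_qpolyXn.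
by rewrite norm_even_odd -comp_polyB Ni dvdp_Xodd_comp_X2.
Qed.

End QuotientXn.

Section SqrtLift.
Variable R : fieldType.
Hypothesis two_neq0 : (2%:R : R) != 0.

(* Newton step: if a^2 = w mod X^(M+1) then (a - c X^(M+1))^2 = w mod X^(M+2)
   for c = g(0) / 2a(0), where a^2 - w = X^(M+1) g. *)
Lemma sqrt_liftXn (w : {poly R}) r : r != 0 -> r ^+ 2 = w`_0 ->
  forall M, exists a : {poly R}, a`_0 = r /\ 'X^(M.+1) %| a ^+ 2 - w.
Proof.
move=> hr hw; elim=> [|M [a [ha /dvdpP [g hg]]]].
  exists r%:P; rewrite coefC; split => //.
  by rewrite expr1 dvdp_X_coef0 coefB coef0_expr2 coefC hw subrr.
pose c := g`_0 / (2%:R * r).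
exists (a - c%:P * 'X^(M.+1)); split.
  by rewrite coefB coef0M coefC coefXn mulr0 subr0.
have -> : (a - c%:P * 'X^(M.+1)) ^+ 2 - w =
    'X^(M.+1) * (g - 2%:R * c%:P * a + c%:P ^+ 2 * 'X^(M.+1)).
  transitivity ((a ^+ 2 - w) - 2%:R * c%:P * a * 'X^(M.+1) +
    c%:P ^+ 2 * 'X^(M.+1) * 'X^(M.+1)); first by ring.
  by rewrite hg; ring.
rewrite exprSr dvdp_mul2l ?expf_neq0 ?polyX_eq0 // dvdp_X_coef0.
rewrite coefD coefB !coef0M coefXn mulr0 addr0 ha -polyC_natr !coefC /= /c.
by apply/eqP; field; rewrite hr two_neq0.
Qed.

End SqrtLift.

Section NormsModXn.
Variable k : finFieldType.
Implicit Types w A B : {poly k}.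

(* Peeling off X: X^(j+1) w = A^2 - X B^2 forces X | A, and then X^j (-w) = B^2 - X A'^2. *)
Lemma sq_unit_of_normXn j L w A B : (j < L)%N -> w`_0 != 0 ->
  'X^L %| 'X^j * w - (A ^+ 2 - 'X * B ^+ 2) -> sq_unit ((-1) ^+ j * w`_0).
Proof.
elim: j L w A B => [|j IH] L w A B hjL hw h;
  have := coef0_dvdp_Xn (leq_ltn_trans (leq0n _) hjL) h; rewrite !coefB coef0_expr2.
  rewrite expr0 !mul1r coef0M coefX mul0r subr0 => /eqP; rewrite subr_eq0 => /eqP w0.
  by exists A`_0; rewrite -w0; split => //; apply: contra hw; rewrite w0 sqrf_eq0.
rewrite coef0_mulXn // coef0M coefX mul0r subr0 sub0r => /eqP; rewrite oppr_eq0 sqrf_eq0.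
case/eqP/coef0_eq0_mulX => A' hA; case: L hjL h => // L hjL.
have -> : 'X^(j.+1) * w - (A ^+ 2 - 'X * B ^+ 2) =
    'X * - ('X^j * (- w) - (B ^+ 2 - 'X * A' ^+ 2)) by rewrite hA exprS; ring.
rewrite dvdp_XnS_mulX dvdpNr => /IH; rewrite coefN oppr_eq0 => /(_ hjL hw).
by rewrite exprS mulN1r mulrN mulNr.
Qed.

Hypothesis two_neq0 : (2%:R : k) != 0.

Lemma normXn_of_sq_unit j L w : sq_unit ((-1) ^+ j * w`_0) ->
  exists A B, 'X^L %| 'X^j * w - (A ^+ 2 - 'X * B ^+ 2).
Proof.
case=> r [hr]; rewrite -signr_odd.
have := odd_double_half j; set i := j./2.
case: (odd j) => <-; rewrite ?add1n ?add0n ?expr1 ?expr0 ?mulN1r ?mul1r => hsq.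
- have hsqN : r ^+ 2 = (- w)`_0 by rewrite coefN.
  have [b [_ hb]] := sqrt_liftXn two_neq0 hr hsqN L.
  exists 0, ('X^i * b).
  have -> : 'X^(i.*2.+1) * w - (0 ^+ 2 - 'X * ('X^i * b) ^+ 2) =
      'X^(i.*2.+1) * (b ^+ 2 - - w) by rewrite -muln2 exprSr exprM; ring.
  exact/dvdp_mull/(dvdp_XnW (leqnSn L)).
- have [b [_ hb]] := sqrt_liftXn two_neq0 hr hsq L.
  exists ('X^i * b), 0.
  have -> : 'X^(i.*2) * w - (('X^i * b) ^+ 2 - 'X * 0 ^+ 2) =
      - ('X^(i.*2) * (b ^+ 2 - w)) by rewrite -muln2 exprM; ring.
  by rewrite dvdpNr; apply/dvdp_mull/(dvdp_XnW (leqnSn L)).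
Qed.

Lemma normXnP j L w : (j < L)%N -> w`_0 != 0 ->
  (exists A B, 'X^L %| 'X^j * w - (A ^+ 2 - 'X * B ^+ 2)) <->
  sq_unit ((-1) ^+ j * w`_0).
Proof.
move=> hjL hw; split; last exact: normXn_of_sq_unit.
by case=> A [B]; apply: sq_unit_of_normXn.
Qed.

End NormsModXn.

Lemma card_two_to_one (T U : finType) (A : {set T}) (f : T -> U) (g : T -> T) :
  (forall x, x \in A -> [/\ g x \in A, g x != x & f (g x) = f x]) ->
  (forall x y, x \in A -> y \in A -> f x = f y -> y = x \/ y = g x) ->
  #|A| = (2 * #|f @: A|)%N.
Proof.
move=> hg hf; rewrite -sum1_card (partition_big f (mem (f @: A))); last first.
  by move=> x hx; apply: imset_f.
rewrite mulnC -sum_nat_const; apply: eq_bigr => _ /imsetP [x hx ->].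
have [gxA gx_neq fgx] := hg x hx.
have -> : 2%N = #|[set x; g x]| by rewrite cards2 eq_sym gx_neq.
rewrite sum1_card; apply: eq_card => y.
rewrite !inE; apply/andP/idP => [[yA /eqP /esym/(hf _ _ hx yA)]|].
  by case=> ->; rewrite eqxx ?orbT.
by case/orP => /eqP ->; rewrite ?fgx.
Qed.

Section SquareCount.
Variable k : finFieldType.
Hypothesis two_neq0 : (2%:R : k) != 0.

Definition sq_unitb (c : k) := [exists y : k, (y != 0) && (y ^+ 2 == c)].

Lemma sq_unitP c : reflect (sq_unit c) (sq_unitb c).
Proof.
apply: (iffP existsP) => [[y /andP [y0 /eqP]]|[y [y0 <-]]]; first by exists y.
by exists y; rewrite y0 eqxx.
Qed.

Lemma oppr_neq_id (y : k) : y != 0 -> - y != y.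
Proof.
move=> y0; apply/eqP => yN.
have /eqP : 2%:R * y = 0 by rewrite mulr_natl mulr2n -{1}yN addNr.
by rewrite mulf_eq0 (negbTE two_neq0) (negbTE y0).
Qed.

Lemma card_sq_unit : #|[set c | sq_unitb c]| = (#|k| - 1)./2.
Proof.
have -> : [set c | sq_unitb c] = (fun y : k => y ^+ 2) @: [set~ 0].
  apply/setP => c; rewrite inE; apply/sq_unitP/imsetP => [[y [y0 <-]]|[y]].
    by exists y; rewrite ?inE.
  by rewrite in_setC1 => y0 ->; exists y.
rewrite subn1 -(cardsC1 (0 : k)).
rewrite (@card_two_to_one _ _ [set~ 0] (fun y => y ^+ 2) (fun y => - y)) ?mul2n ?doubleK //.
  by move=> x; rewrite !inE => x0; rewrite oppr_eq0 x0 oppr_neq_id ?sqrrN.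
move=> x y _ _ /eqP; rewrite eq_sym -subr_eq0 subr_sqr mulf_eq0 subr_eq0 addr_eq0.
by case/orP => /eqP; auto.
Qed.

Lemma card_sq_unit_scale (u : k) : u != 0 ->
  #|[set c | sq_unitb (u * c)]| = (#|k| - 1)./2.
Proof.
move=> u0; have -> : [set c | sq_unitb (u * c)] = *%R u @^-1: [set c | sq_unitb c].
  by apply/setP => c; rewrite !inE.
by rewrite card_preimset ?card_sq_unit //; apply: mulfI.
Qed.

(* c^2 - 1 = y^2 means (c + y)(c - y) = 1, so c = J(c + y) for the Joukowski map J. *)
Definition joukowski (z : k) := (z + z^-1) / 2%:R.

Lemma joukowski_sqrB1 z : z != 0 ->
  joukowski z ^+ 2 - 1 = ((z - z^-1) / 2%:R) ^+ 2.
Proof. by move=> z0; rewrite /joukowski; field; rewrite z0 two_neq0. Qed.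

Lemma joukowski_eq y z : y != 0 -> z != 0 ->
  joukowski y = joukowski z -> z = y \/ z = y^-1.
Proof.
move=> y0 z0 /(mulIf (invr_neq0 two_neq0)) e.
have /eqP : (y - z) * (y * z - 1) = 0.
  transitivity (y * z * ((y + y^-1) - (z + z^-1))); first by field; rewrite y0 z0.
  by rewrite e subrr mulr0.
rewrite mulf_eq0 !subr_eq0 => /orP [/eqP -> | /eqP yz1]; first by left.
by right; apply: (mulfI y0); rewrite yz1 mulfV.
Qed.

Lemma joukowski_image :
  joukowski @: [set z | (z != 0) && (z ^+ 2 != 1)] =
  [set c | [&& c != 1, c != -1 & sq_unitb (c ^+ 2 - 1)]].
Proof.
apply/setP => c; rewrite !inE; apply/imsetP/idP => [[z]|].
  rewrite inE => /andP [z0 z2] ->.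
  have y0 : (z - z^-1) / 2%:R != 0.
    rewrite mulf_neq0 ?invr_eq0 // subr_eq0; apply: contra z2 => /eqP zV.
    by rewrite expr2 {2}zV mulfV.
  have : joukowski z ^+ 2 != 1 by rewrite -subr_eq0 joukowski_sqrB1 // expf_neq0.
  rewrite sqrf_eq1 negb_or => /andP [-> ->] /=.
  by apply/sq_unitP; exists ((z - z^-1) / 2%:R); rewrite joukowski_sqrB1.
case/and3P => c1 cN1 /sq_unitP [y [y0 hy]].
have hz : (c + y) * (c - y) = 1 by rewrite mulrC -subr_sqr hy opprB addrC subrK.
have z0 : c + y != 0 by apply: contra_eq_neq hz => ->; rewrite mul0r eq_sym oner_neq0.
have zV : (c + y)^-1 = c - y by rewrite -[LHS]mulr1 -hz mulKf.
exists (c + y); last by rewrite /joukowski zV; field.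
rewrite inE z0 /=; apply: contra (oppr_neq_id y0) => /eqP z2.
have zz : c + y = (c + y)^-1 by apply: (mulfI z0); rewrite mulfV // -expr2 z2.
by rewrite zV in zz; move/addrI: zz => yN; rewrite -yN.
Qed.

Lemma card_sq_unit_sqrB1 :
  #|[set c : k | [&& c != 1, c != -1 & sq_unitb (c ^+ 2 - 1)]]| = (#|k| - 3)./2.
Proof.
set A := [set z : k | (z != 0) && (z ^+ 2 != 1)].
have cardA : #|A| = (#|k| - 3)%N.
  have -> : A = [set~ 0] :\: [set 1; -1].
    by apply/setP => z; rewrite !inE sqrf_eq1 negb_or andbC; case: (z == 0).
  have oneN1 : (1 : k) != -1 by rewrite eq_sym oppr_neq_id ?oner_eq0.
  rewrite cardsDS ?cardsC1 ?cards2 ?oneN1 /=; first by lia.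
  by apply/subsetP => z; rewrite !inE => /orP [] /eqP ->; rewrite ?oppr_eq0 oner_eq0.
rewrite -joukowski_image -cardA.
rewrite (@card_two_to_one _ _ A joukowski (fun z => z^-1)) ?mul2n ?doubleK //.
  move=> z; rewrite !inE => /andP [z0 z2].
  rewrite invr_eq0 z0 exprVn invr_eq1 z2 /joukowski invrK addrC; split => //.
  by apply: contra z2 => /eqP zV; rewrite expr2 -{1}zV mulVf.
by move=> y z; rewrite !inE => /andP [y0 _] /andP [z0 _]; apply: joukowski_eq.
Qed.

End SquareCount.

Lemma val_qpoly_scalar (R : comNzRingType) (h : {poly R}) (c : R) :
  val (c%:A : {poly %/ h}) = c%:P.
Proof. by rewrite /= alg_polyC. Qed.

Lemma qpoly_scalarE (R : comNzRingType) (h : {poly R}) (c : R) :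
  (c%:A : {poly %/ h}) = in_qpoly h c%:P.
Proof. by rewrite -alg_polyC in_qpolyZ in_qpoly1. Qed.

Lemma val_qpoly1 (R : comNzRingType) (h : {poly R}) : val (1 : {poly %/ h}) = 1%:P.
Proof. by rewrite polyC1. Qed.

Lemma val_qpolyN1 (R : comNzRingType) (h : {poly R}) : val (-1 : {poly %/ h}) = (-1)%:P.
Proof. by rewrite polyCN polyC1. Qed.

Lemma leq_divn2 m p : (m %/ 2 <= p)%N = (m <= 2 * p + 1)%N.
Proof. by apply/idP/idP; lia. Qed.

Section Qalpha.
Variable k : finFieldType.
Variables n a : nat.
Hypothesis n_gt0 : (0 < n)%N.
Hypothesis a_le : (a <= n - 1)%N.
Hypothesis two_neq0 : (2%:R : k) != 0.
Implicit Types s t : Rt k n a.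

Local Notation L := (n - a)%N.
Local Notation N := (Rexp n a).

Lemma Rt_exp_gt0 : (0 < L)%N. Proof. lia. Qed.

Lemma Rexp_gt0 : (0 < N)%N. Proof. rewrite /Rexp; lia. Qed.

Lemma Rexp_double : N = L.-1.*2.+1. Proof. rewrite /Rexp -!muln2; lia. Qed.

Lemma size_Rt s : (size (val s) <= L)%N.
Proof.
rewrite -ltnS; apply: leq_trans (size_mk_monic s) _.
by rewrite mk_monic_Xn size_polyXn prednK // Rt_exp_gt0.
Qed.

Lemma congru_emb_even i s c c0 : (i.*2 <= N)%N -> val c = c0%:P ->
  congru (i.*2) (emb s) c = ('X^i %| val s - c0%:P).
Proof.
move=> hi hc; rewrite /congru hc val_in_qpolyXn ?Rexp_gt0 // dvdp_Xn_rmodpXn //.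
by rewrite -[c0%:P in LHS](comp_polyC c0 'X^2) -comp_polyB dvdp_Xeven_comp_X2.
Qed.

Lemma congru1_emb s c c0 : val c = c0%:P -> congru 1 (emb s) c = ((val s)`_0 == c0).
Proof.
move=> hc; rewrite /congru hc val_in_qpolyXn ?Rexp_gt0 // dvdp_Xn_rmodpXn ?Rexp_gt0 //.
rewrite -[c0%:P in LHS](comp_polyC c0 'X^2) -comp_polyB (dvdp_Xodd_comp_X2 0).
by rewrite expr1 dvdp_X_coef0 coefB coefC subr_eq0.
Qed.

Lemma coef0_emb s : (val (emb s))`_0 = (val s)`_0.
Proof.
have : 'X^1 %| val (emb s) - (val s \Po 'X^2).
  by rewrite val_in_qpolyXn ?Rexp_gt0 // dvdp_Xn_rmodpXn ?Rexp_gt0 // subrr dvdp0.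
by rewrite expr1 dvdp_X_coef0 coefB subr_eq0 coef0_comp_X2 => /eqP.
Qed.

Lemma Rprime_dvdp s : Rprime s =
  ('X^(n - (2 * a + 1)) %| val s - 1) || ('X^(n - (2 * a + 1)) %| val s + 1).
Proof.
rewrite /Rprime; have -> : ((2 * n - 1) + 1 - 2 * (2 * a + 1) = (n - (2 * a + 1)).*2)%N.
  by rewrite -muln2; lia.
have hle : ((n - (2 * a + 1)).*2 <= N)%N by rewrite /Rexp -muln2; lia.
rewrite (congru_emb_even _ hle (val_qpoly1 _)) (congru_emb_even _ hle (val_qpolyN1 _)).
by rewrite polyCN opprK.
Qed.

Lemma emb_norm_sub1 s :
  emb s * tau (emb s) - 1 = in_qpoly 'X^N ((val s ^+ 2 - 1) \Po 'X^2).
Proof.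
rewrite /tau in_qpolyXn_comp_NX ?Rexp_gt0 // comp_X2_NX -in_qpolyM.
by rewrite -(in_qpoly1 'X^N) -raddfB /= comp_polyB comp_polyC expr2 comp_polyM.
Qed.

Lemma QsetP s : s \in Qset k n a <->
  [/\ Rprime s, (exists A B, 'X^L %| val s ^+ 2 - 1 - (A ^+ 2 - 'X * B ^+ 2)),
      val s != 1 & val s != -1].
Proof.
have normP := even_normP Rexp_gt0 (val s ^+ 2 - 1) Rexp_double.
rewrite prednK ?Rt_exp_gt0 // -emb_norm_sub1 in normP.
rewrite inE -!val_eqE /=; split.
  by case/and4P => hR /existsP ex h1 h2; split => //; apply/normP.
by case=> -> /normP hAB -> ->; rewrite /= andbT; apply/existsP.
Qed.

Lemma Rprime_coef0_not_sign s : (val s)`_0 != 1 -> (val s)`_0 != -1 ->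
  Rprime s = (n <= 2 * a + 1)%N.
Proof.
move=> s0_neq1 s0_neqN1; rewrite Rprime_dvdp; case: leqP => hn.
  by rewrite (_ : n - _ = 0)%N ?expr0 ?dvd1p //; lia.
apply/negbTE; rewrite negb_or; apply/andP; split; apply/negP => /coef0_dvdp_Xn.
  by rewrite subn_gt0 => /(_ hn) /eqP; rewrite coefB coef1 subr_eq0; apply/negP.
by rewrite subn_gt0 => /(_ hn) /eqP; rewrite coefD coef1 addr_eq0; apply/negP.
Qed.

Lemma Qset_coef0_not_sign s : (val s)`_0 != 1 -> (val s)`_0 != -1 ->
  s \in Qset k n a <-> (n <= 2 * a + 1)%N /\ sq_unit ((val s)`_0 ^+ 2 - 1).
Proof.
move=> s0_neq1 s0_neqN1.
have coef0_sqrB1 : (val s ^+ 2 - 1)`_0 = (val s)`_0 ^+ 2 - 1.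
  by rewrite coefB coef0_expr2 coef1.
have w0 : (val s ^+ 2 - 1)`_0 != 0.
  by rewrite coef0_sqrB1 -(expr1n _ 2) subr_sqr mulf_neq0 ?subr_eq0 ?addr_eq0.
have := normXnP two_neq0 Rt_exp_gt0 w0; rewrite expr0 !mul1r coef0_sqrB1 => normP.
have s_neq1 : val s != 1 by apply: contra s0_neq1 => /eqP ->; rewrite coef1.
have s_neqN1 : val s != -1 by apply: contra s0_neqN1 => /eqP ->; rewrite coefN coef1.
rewrite QsetP Rprime_coef0_not_sign //.
by split => [[hn /normP hsq _ _] | [hn /normP hAB]].
Qed.

Lemma Rt_Xn_factor_lt s (c : k) j (W : {poly k}) :
  W != 0 -> val s = c%:P + 'X^j * W -> (j < L)%N.
Proof.
move=> W0 hs; have : (size ('X^j * W)%R <= L)%N.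
  rewrite (_ : 'X^j * W = val s - c%:P); last by rewrite hs addrAC subrr add0r.
  apply: leq_trans (size_polyD _ _) _; rewrite geq_max size_Rt size_polyN /=.
  exact: leq_trans (size_polyC_leq1 _) Rt_exp_gt0.
by rewrite mulrC size_mulXn //; have := size_poly_gt0 W; rewrite W0; lia.
Qed.

Lemma Rprime_sign_Xn s (eps : k) j (W : {poly k}) :
  eps = 1 \/ eps = -1 -> (0 < j)%N -> W`_0 != 0 -> val s = eps%:P + 'X^j * W ->
  Rprime s = (n - (2 * a + 1) <= j)%N.
Proof.
move=> heps j_gt0 W00 hs.
have dvd_subC e : ('X^e %| val s - eps%:P) = (e <= j)%N.
  by rewrite hs addrAC subrr add0r dvdp_Xn_mulXn.
have dvd_addC e : (0 < e)%N -> ~~ ('X^e %| val s + eps%:P).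
  move=> e_gt0; apply/negP => /(coef0_dvdp_Xn e_gt0) /eqP.
  rewrite hs -addrA coefD coefC coefD coef0_mulXn // coefC add0r -mulr2n -mulr_natl.
  by rewrite mulf_eq0 (negbTE two_neq0); case: heps => ->; rewrite ?oppr_eq0 oner_eq0.
rewrite Rprime_dvdp; have [->|e_gt0] := posnP (n - (2 * a + 1)).
  by rewrite expr0 !dvd1p.
have := dvd_subC (n - (2 * a + 1))%N; have := dvd_addC _ e_gt0.
by case: heps => ->; rewrite ?polyCN polyC1 ?opprK => /negbTE -> <-; rewrite ?orbF.
Qed.

Lemma Qset_sign_Xn s (eps : k) j (W : {poly k}) :
  eps = 1 \/ eps = -1 -> (0 < j)%N -> W`_0 != 0 -> val s = eps%:P + 'X^j * W ->
  s \in Qset k n a <->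
  (n - (2 * a + 1) <= j)%N /\ sq_unit (eps * (-1) ^+ j * 2%:R * W`_0).
Proof.
move=> heps j_gt0 W00 hs.
have eps2 : eps ^+ 2 = 1 by case: heps => ->; rewrite ?sqrrN expr1n.
have eps0 : eps != 0 by case: heps => ->; rewrite ?oppr_eq0 oner_eq0.
have W0 : W != 0 by apply: contraNneq W00 => ->; rewrite coef0.
have jL := Rt_Xn_factor_lt W0 hs.
rewrite QsetP (Rprime_sign_Xn heps j_gt0 W00 hs).
pose w := W * (2%:R * eps%:P + 'X^j * W).
have sqrB1 : val s ^+ 2 - 1 = 'X^j * w.
  rewrite hs; transitivity ('X^j * w + (eps%:P ^+ 2 - 1)); first by rewrite /w; ring.
  by rewrite -rmorphXn /= eps2 subrr addr0.
have w0 : w`_0 = W`_0 * (2%:R * eps).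
  by rewrite coef0M coefD coef0_mulXn // addr0 -polyC_natr -polyCM coefC.
have w0_neq0 : w`_0 != 0 by rewrite w0 !mulf_neq0.
have := normXnP two_neq0 jL w0_neq0.
rewrite w0 (_ : _ * (_ * _) = eps * (-1) ^+ j * 2%:R * W`_0); last by ring.
move=> normP.
have s_neqC c : val s != c%:P.
  apply/eqP => sc; have XjW : 'X^j * W = (c - eps)%:P.
    by rewrite polyCB -sc hs addrAC subrr add0r.
  have := coef0_mulXn W j_gt0; rewrite XjW coefC /= => ce.
  move: XjW; rewrite ce polyC0 => /eqP; rewrite mulf_eq0 expf_eq0 polyX_eq0 andbF /=.
  exact/negP.
rewrite sqrB1; split => [[hj /normP hsq _ _] | [hj /normP hAB]] //.
by split => //; rewrite -?polyC1 -?polyCN s_neqC.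
Qed.

Lemma Qset_condAB_sign s (eps : k) : eps = 1 \/ eps = -1 -> (val s)`_0 = eps ->
  val s != eps%:P -> (s \in Qset k n a <-> condA s \/ condB s).
Proof.
move=> heps s0 s_neq; rewrite -s0 in s_neq.
have [j [W [j_gt0 W00 hs]]] := poly_coef0_Xn_factor s_neq; rewrite s0 in hs.
have W0 : W != 0 by apply: contraNneq W00 => ->; rewrite coef0.
have jL := Rt_Xn_factor_lt W0 hs.
rewrite (Qset_sign_Xn heps j_gt0 W00 hs); split => [[hj hsq]|].
  right; exists eps, j, W`_0; split => //.
  - by rewrite (congru1_emb _ (val_qpoly_scalar _ _)) s0.
  - rewrite hs (_ : _ - _ = 'X^j * (W - (W`_0)%:P)); last by rewrite -mul_polyC; ring.
    by rewrite dvdp_XnS_mulXn dvdp_X_coef0 coefB coefC subrr.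
  - by rewrite geq_max j_gt0 hj /=; lia.
case=> [[_ c1 cN1 _]|[eps' [j' [c [_ [hc c0] hdv hj' hsq]]]]].
  move: c1 cN1; rewrite (congru1_emb _ (val_qpoly1 _)) (congru1_emb _ (val_qpolyN1 _)) s0.
  by case: heps => -> /negP c1 /negP cN1; [case: c1 | case: cN1].
move: hc; rewrite (congru1_emb _ (val_qpoly_scalar _ _)) s0 => /eqP eps'E; subst eps'.
have hdv' : 'X^(j'.+1) %| 'X^j * W - c *: 'X^j'.
  by move: hdv; rewrite hs opprD addrACA subrr add0r.
have [<- <-] := polyXn_factor_uniq W00 c0 hdv'.
by split => //; move: hj'; rewrite geq_max => /andP [/andP [_ ->]].
Qed.

Lemma Qset_condAB s : s != 1 -> s != -1 -> (s \in Qset k n a <-> condA s \/ condB s).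
Proof.
rewrite -!val_eqE /= => s_neq1 s_neqN1.
have [e1|e1] := eqVneq (val s)`_0 1.
  by apply: Qset_condAB_sign (or_introl erefl) e1 _; rewrite polyC1.
have [eN1|eN1] := eqVneq (val s)`_0 (-1).
  by apply: Qset_condAB_sign (or_intror erefl) eN1 _; rewrite polyCN polyC1.
rewrite Qset_coef0_not_sign // -leq_divn2 /condA.
rewrite (congru1_emb _ (val_qpoly1 _)) (congru1_emb _ (val_qpolyN1 _)) coef0_emb.
split=> [[hle hsq]|[[hle _ _ hsq] | [eps [j [c [heps [hc _] _ _ _]]]]]]; [by left | by [] |].
move: hc; rewrite (congru1_emb _ (val_qpoly_scalar _ _)) => /eqP hc.
by case: heps => epsE; [move: e1 | move: eN1]; rewrite hc epsE eqxx.
Qed.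

Lemma card_Qset_top : a = (n - 1)%N -> #|Qset k n a| = (#|k| - 3)./2.
Proof.
move=> ha; have sC s : val s = ((val s)`_0)%:P.
  by apply: size1_polyC; apply: leq_trans (size_Rt s) _; lia.
rewrite -(card_in_imset (f := fun s : Rt k n a => (val s)`_0)); last first.
  by move=> s t _ _ e; apply: val_inj; rewrite sC [RHS]sC /= e.
rewrite -(card_sq_unit_sqrB1 two_neq0); apply: eq_card => c; rewrite [in RHS]inE.
apply/imsetP/and3P => [[s sQ ->]|[c1 cN1 /sq_unitP hsq]].
  have [_ _ s1 sN1] := (QsetP s).1 sQ.
  have e1 : (val s)`_0 != 1 by apply: contra s1; rewrite {2}sC => /eqP ->.
  have eN1 : (val s)`_0 != -1.
    by apply: contra sN1; rewrite {2}sC => /eqP ->; rewrite polyCN.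
  by have [_ /sq_unitP] := (Qset_coef0_not_sign e1 eN1).1 sQ.
have c0E : (val (c%:A : Rt k n a))`_0 = c by rewrite val_qpoly_scalar coefC.
exists c%:A => //; apply/Qset_coef0_not_sign; rewrite c0E //; split => //; lia.
Qed.

Section Reduction.
Hypothesis a2_le : (a.+2 <= n)%N.
Local Notation M := (n - a - 1)%N.
Implicit Types (p : {poly k}) (c : k).

Lemma pr_exp_gt0 : (0 < M)%N. Proof. lia. Qed.

Definition lift_top (p : {poly k}) (c : k) : Rt k n a := in_qpoly 'X^L (p + c *: 'X^M).

Lemma val_lift_top p c : (size p <= L)%N -> val (lift_top p c) = p + c *: 'X^M.
Proof.
move=> sp; rewrite val_in_qpolyXn ?Rt_exp_gt0 // Pdiv.Ring.rmodp_small //.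
rewrite size_polyXn ltnS; apply: leq_trans (size_polyD _ _) _; rewrite geq_max sp.
by apply: leq_trans (size_scale_leq _ _) _; rewrite size_polyXn; lia.
Qed.

Lemma lift_top_inj p : (size p <= L)%N -> injective (lift_top p).
Proof.
move=> sp c c' /(congr1 (fun s : Rt k n a => (val s)`_M)).
by rewrite !val_lift_top // !coefD !coefZ coefXn eqxx !mulr1 => /addrI.
Qed.

Lemma fiber_lift_top p : (size p <= L)%N ->
  [set s : Rt k n a | 'X^M %| val s - p] = lift_top p @: [set: k].
Proof.
move=> sp; apply/setP => s; rewrite inE; apply/idP/imsetP => [/dvdpP [q sq]|[c _ ->]].
  have sq' : val s = p + q * 'X^M by rewrite -sq addrC subrK.
  have sq1 : (size q <= 1)%N.
    have [->|q0] := eqVneq q 0; first by rewrite size_poly0.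
    have : (size (q * 'X^M)%R <= L)%N.
      rewrite -sq; apply: leq_trans (size_polyD _ _) _.
      by rewrite geq_max size_Rt size_polyN sp.
    by rewrite size_mulXn //; lia.
  exists q`_0 => //; apply: val_inj.
  by rewrite val_lift_top // sq' -mul_polyC -(size1_polyC sq1).
by rewrite val_lift_top // addrAC subrr add0r -mul_polyC dvdp_mulIr.
Qed.

Lemma pr_eqE s t : (pr s == pr t) = ('X^M %| val s - val t).
Proof. by apply: eq_in_qpolyXn; exact: pr_exp_gt0. Qed.

Lemma pr_eq_scalar s c : (pr s == c%:A) = ('X^M %| val s - c%:P).
Proof. by rewrite qpoly_scalarE; apply: eq_in_qpolyXn; exact: pr_exp_gt0. Qed.

Lemma Qset_lift_sign (eps c : k) : eps = 1 \/ eps = -1 ->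
  (lift_top eps%:P c \in Qset k n a) = sq_unitb (eps * (-1) ^+ M * 2%:R * c).
Proof.
move=> heps; have sp : (size eps%:P <= L)%N.
  exact: leq_trans (size_polyC_leq1 _) Rt_exp_gt0.
have [->|c0] := eqVneq c 0.
  rewrite mulr0; apply/idP/sq_unitP => [/QsetP [_ _]|[y [/negbTE y0 /eqP]]].
    by rewrite val_lift_top // scale0r addr0; case: heps => ->;
      rewrite ?polyCN polyC1 eqxx.
  by rewrite sqrf_eq0 y0.
have hval : val (lift_top eps%:P c) = eps%:P + 'X^M * c%:P.
  by rewrite val_lift_top // mulrC mul_polyC.
have c0' : (c%:P)`_0 != 0 by rewrite coefC.
have := Qset_sign_Xn heps pr_exp_gt0 c0' hval; rewrite coefC /= => QE.
by apply/idP/sq_unitP => [/QE [] // | hsq]; apply/QE; split => //; lia.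
Qed.

Lemma card_Qset_pr_sign (e : Rpr k n a) : e = 1 \/ e = -1 ->
  #|[set s in Qset k n a | pr s == e]| = (#|k| - 1)./2.
Proof.
move=> he; have [eps heps ->] : exists2 eps : k, eps = 1 \/ eps = -1 & e = eps%:A.
  case: he => ->; first by exists 1; [left | rewrite scale1r].
  by exists (-1); [right | rewrite scaleN1r].
have sp : (size eps%:P <= L)%N.
  exact: leq_trans (size_polyC_leq1 _) Rt_exp_gt0.
have u0 : eps * (-1) ^+ M * 2%:R != 0.
  by rewrite !mulf_neq0 ?signr_eq0 //; case: heps => ->; rewrite ?oppr_eq0 oner_eq0.
rewrite -(card_sq_unit_scale two_neq0 u0) -(card_imset _ (lift_top_inj sp)).
apply: eq_card => s; rewrite inE pr_eq_scalar.
have := fiber_lift_top sp => /setP /(_ s); rewrite inE => ->.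
apply/andP/imsetP => [[sQ /imsetP [c _ sE]] | [c]].
  by exists c => //; rewrite inE -Qset_lift_sign // -sE.
by rewrite inE -Qset_lift_sign // => cQ ->; rewrite cQ imset_f.
Qed.

(* As j < L - 1, adding c t^(L-1) changes neither j nor the coefficient of t^j. *)
Lemma Qset_sign_shift s0 (eps c : k) : eps = 1 \/ eps = -1 -> (val s0)`_0 = eps ->
  ~~ ('X^M %| val s0 - eps%:P) -> s0 \in Qset k n a ->
  lift_top (val s0) c \in Qset k n a.
Proof.
move=> heps s00 ndvd s0Q.
have [|j [W [j_gt0 W00 hs]]] := poly_coef0_Xn_factor (p := val s0).
  by rewrite s00; apply: contraNneq ndvd => ->; rewrite subrr dvdp0.
rewrite s00 in hs.
have jM : (j < M)%N.
  rewrite ltnNge -(dvdp_Xn_mulXn _ _ W00) (_ : 'X^j * W = val s0 - eps%:P) //.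
  by rewrite hs addrAC subrr add0r.
pose W' := W + c *: 'X^(M - j).
have W'0 : W'`_0 = W`_0 by rewrite coefD coefZ coefXn eq_sym subn_eq0 leqNgt jM mulr0 addr0.
have hs' : val (lift_top (val s0) c) = eps%:P + 'X^j * W'.
  rewrite val_lift_top ?size_Rt // hs /W' mulrDr -addrA -scalerAr -exprD subnKC //.
  exact: ltnW.
have [hj hsq] := (Qset_sign_Xn heps j_gt0 W00 hs).1 s0Q.
by apply/(Qset_sign_Xn heps j_gt0 _ hs'); rewrite W'0.
Qed.

Lemma card_pr_fiber s0 : #|[set s : Rt k n a | pr s == pr s0]| = #|k|.
Proof.
rewrite -cardsT -(card_imset _ (lift_top_inj (size_Rt s0))) -fiber_lift_top ?size_Rt //.
by apply: eq_card => s; rewrite !inE pr_eqE.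
Qed.

Lemma Qset_pr_fiber s0 : pr s0 != 1 -> pr s0 != -1 ->
  s0 \in Qset k n a <-> [set s | pr s == pr s0] \subset Qset k n a.
Proof.
move=> pr_neq1 pr_neqN1.
have ndvd1 : ~~ ('X^M %| val s0 - 1%:P) by rewrite -pr_eq_scalar scale1r.
have ndvdN1 : ~~ ('X^M %| val s0 - (-1)%:P) by rewrite -pr_eq_scalar scaleN1r.
split => [s0Q|/subsetP]; last by apply; rewrite inE eqxx.
apply/subsetP => s; rewrite inE pr_eqE.
have := fiber_lift_top (size_Rt s0) => /setP /(_ s); rewrite inE => -> /imsetP [c _ ->].
have [e1|e1] := eqVneq (val s0)`_0 1; first exact: Qset_sign_shift (or_introl _) e1 _ _.
have [eN1|eN1] := eqVneq (val s0)`_0 (-1); first exact: Qset_sign_shift (or_intror _) eN1 _ _.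
have s00 : (val (lift_top (val s0) c))`_0 = (val s0)`_0.
  by rewrite val_lift_top ?size_Rt // coefD coefZ coefXn eq_sym eqn0Ngt pr_exp_gt0 mulr0 addr0.
by move: s0Q; rewrite !Qset_coef0_not_sign ?s00.
Qed.

End Reduction.
End Qalpha.

Lemma two_neq0_of_odd_card (k : finFieldType) : odd #|k| -> (2%:R : k) != 0.
Proof.
move=> k_odd; apply/eqP => two0.
have pchar2 : 2%N \in [pchar k] by rewrite inE /= two0 eqxx.
have cardk := card_pprimeChar pchar2.
move: k_odd; rewrite cardk oddX /= orbF => /eqP e0.
by have := finNzRing_gt1 k; rewrite cardk e0 expn0 ltnn.
Qed.

Unset Implicit Arguments.

Theorem lemma4p15 (k : finFieldType) (n a : nat) :
  (0 < n)%N -> (a <= n - 1)%N -> odd #|k| ->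
  (forall s : Rt k n a, s != 1 -> s != -1 ->
     (s \in Qset k n a <-> condA s \/ condB s)) /\
  ((a.+2 <= n)%N ->
     #|[set s in Qset k n a | pr s == 1]| = (#|k| - 1)./2 /\
     #|[set s in Qset k n a | pr s == -1]| = (#|k| - 1)./2) /\
  ((a.+2 <= n)%N ->
     forall s0 : Rt k n a, Rprime s0 -> pr s0 != 1 -> pr s0 != -1 ->
       #|[set s : Rt k n a | pr s == pr s0]| = #|k| /\
       (s0 \in Qset k n a <->
          [set s : Rt k n a | pr s == pr s0] \subset Qset k n a)) /\
  #|Qset k n (n - 1)| = (#|k| - 3)./2.
Proof.
move=> n_gt0 a_le k_odd; have two_neq0 := two_neq0_of_odd_card k_odd.
split; first exact: Qset_condAB.
split.
  move=> a2_le; have card_sign := card_Qset_pr_sign n_gt0 a_le two_neq0 a2_le.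
  by split; apply: card_sign; [left | right].
split; last exact: card_Qset_top n_gt0 (leqnn _) two_neq0 erefl.
move=> a2_le s0 _ pr_neq1 pr_neqN1.
by split; [exact: card_pr_fiber | exact: Qset_pr_fiber].
Qed.
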